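(* Let $\mathbb{F}$ be a field of characteristic zero, $n\ge1$, $B\in\mathbb{F}^{n\times n}$ symmetric, and let $G=G(\mathbf 1,B)$ with twin-reduced graph $G'=G(a',B')$. Then $\Gamma(\mathbf 1,B)$ acts transitively on $G$ if and only if $\Gamma(a',B')$ acts transitively on $G'$; and $\Gamma(\mathbf 1,B)$ acts generously transitively on $G$ if and only if $\Gamma(a',B')$ acts generously transitively on $G'$.
   Context: $G(a,B)$ denotes the weighted graph on vertex set $[n]$ with vertex weights $a_i$ and edge weights $B_{i,j}$; $\mathbf 1$ is the all-ones vector. Vertices $i,j$ are twins if rows $i$ and $j$ of $B$ are equal; let $C_1,\dots,C_m$ be the twin equivalence classes. The twin-reduced graph $G(a',B')$ has vertex set $[m]$, vertex weights $a'_i=\sum_{j\in C_i}a_j$ (here $=|C_i|$), and $B'$ is obtained from $B$ by deleting, for each $i$, all but one of the rows and columns indexed by $C_i$. $\Gamma(a,B)$ is the group of permutations $\gamma$ of the vertex set with $a_{\gamma(i)}=a_i$ and $B_{\gamma(i),\gamma(j)}=B_{i,j}$ for all $i,j$. A permutation group $\Gamma$ acts generously transitively if for all vertices $u,v$ there is $\gamma\in\Gamma$ with $\gamma(u)=v$ and $\gamma(v)=u$. *)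

From HB Require Import structures.
From mathcomp Require Import all_boot all_order all_algebra all_fingroup.
Set Implicit Arguments. Unset Strict Implicit. Unset Printing Implicit Defensive.
Import GRing.Theory.
Local Open Scope ring_scope.

(* Weighted graph G(a,B) on vertex set 'I_n: vertex weights a, edge weights B. *)

Definition twins (R : fieldType) (n : nat) (B : 'M[R]_n) (i j : 'I_n) : bool :=
  row i B == row j B.

Definition in_Gamma (R : fieldType) (n : nat) (a : 'I_n -> R) (B : 'M[R]_n)
    (g : {perm 'I_n}) : Prop :=
  (forall i, a (g i) = a i) /\ (forall i j, B (g i) (g j) = B i j).

Definition Gamma_transitive (R : fieldType) (n : nat) (a : 'I_n -> R)
    (B : 'M[R]_n) : Prop :=
  forall u v : 'I_n, exists g, in_Gamma a B g /\ g u = v.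

Definition Gamma_gen_transitive (R : fieldType) (n : nat) (a : 'I_n -> R)
    (B : 'M[R]_n) : Prop :=
  forall u v : 'I_n, exists g, in_Gamma a B g /\ g u = v /\ g v = u.

Definition twin_reduction (R : fieldType) (n m : nat) (B : 'M[R]_n)
    (r : 'I_m -> 'I_n) : Prop :=
  (forall k l, twins B (r k) (r l) -> k = l) /\
  (forall i, exists k, twins B i (r k)).

Definition reduced_weights (R : fieldType) (n m : nat) (a : 'I_n -> R)
    (B : 'M[R]_n) (r : 'I_m -> 'I_n) : 'I_m -> R :=
  fun k => \sum_(j | twins B j (r k)) a j.

Definition reduced_matrix (R : fieldType) (n m : nat) (B : 'M[R]_n)
    (r : 'I_m -> 'I_n) : 'M[R]_m :=
  \matrix_(k, l) B (r k) (r l).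

From HB Require Import structures.
From mathcomp Require Import all_boot all_order all_algebra all_fingroup.
Set Implicit Arguments. Unset Strict Implicit. Unset Printing Implicit Defensive.
Import GRing.Theory.
Local Open Scope ring_scope.

(* An automorphism g of G(1,B) permutes the twin classes, and this permutation
   preserves both B' and the class sizes a', i.e. lies in Gamma(a',B').
   Conversely, a permutation s of the classes preserving B' and a' lifts to an
   automorphism of G(1,B): in characteristic zero a'(s k) = a'(k) means that
   the classes k and s k have the same size, so they can be matched
   bijectively, and since twins have equal rows and columns the resulting
   permutation of the vertices preserves B.  Finally, a lift only moves u to
   some twin of the prescribed image v, which is repaired by composing with
   transpositions of twins, themselves automorphisms. *)

Lemma pchar0_natr_inj (R : fieldType) : [pchar R] =i pred0 ->
  injective (fun k : nat => k%:R : R).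
Proof.
move=> /pcharf0P natr_eq0 p q /= Epq.
wlog le_pq : p q Epq / (p <= q)%N.
  by move=> W; case: (leqP p q) => [|/ltnW] le; [|symmetry]; apply: W.
have : (q - p)%:R == 0 :> R by rewrite natrB // Epq subrr.
by rewrite natr_eq0 subn_eq0 => le_qp; apply/eqP; rewrite eqn_leq le_pq.
Qed.

Lemma perm_lift_fibers (T K : finType) (c : T -> K) (s : {perm K}) :
  (forall k, #|[set x | c x == s k]| = #|[set x | c x == k]|) ->
  exists h : {perm T}, forall x, c (h x) = s (c x).
Proof.
move=> card_fiber.
pose fiber k := enum [set x | c x == k].
have size_fiber k : size (fiber (s k)) = size (fiber k).
  by rewrite -!cardE card_fiber.
have mem_fiber x k : (x \in fiber k) = (c x == k) by rewrite mem_enum inE.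
have index_fiber x : (index x (fiber (c x)) < size (fiber (s (c x))))%N.
  by rewrite size_fiber index_mem mem_fiber.
pose f x := nth x (fiber (s (c x))) (index x (fiber (c x))).
have c_f x : c (f x) = s (c x).
  by apply/eqP; rewrite -mem_fiber mem_nth.
have f_inj : injective f.
  move=> x y Efxy.
  have Ecxy : c x = c y by apply: (@perm_inj _ s); rewrite -!c_f Efxy.
  have := index_fiber x; have := index_fiber y; rewrite Ecxy => iy ix.
  move: Efxy; rewrite /f Ecxy (set_nth_default y x ix) => /eqP.
  rewrite nth_uniq ?enum_uniq // => /eqP Eindex.
  have x_fiber : x \in fiber (c y) by rewrite mem_fiber Ecxy.
  by rewrite -(nth_index y x_fiber) Eindex nth_index // mem_fiber.
by exists (perm f_inj) => x; rewrite permE.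
Qed.

Section Twins.

Variables (R : fieldType) (n : nat) (B : 'M[R]_n).

Lemma twinsxx i : twins B i i.
Proof. exact: eqxx. Qed.

Lemma twins_sym i j : twins B i j = twins B j i.
Proof. exact: eq_sym. Qed.

Lemma twins_trans i j k : twins B i j -> twins B j k -> twins B i k.
Proof. by rewrite /twins => /eqP ->. Qed.

Lemma twins_row i j x : twins B i j -> B i x = B j x.
Proof. by move=> /eqP/rowP/(_ x); rewrite !mxE. Qed.

Hypothesis B_sym : B^T = B.

Lemma twins_entry i i' j j' :
  twins B i i' -> twins B j j' -> B i j = B i' j'.
Proof.
have Bsym x y : B x y = B y x by rewrite -{1}B_sym mxE.
by move=> /twins_row -> /twins_row Ej; rewrite Bsym Ej Bsym.
Qed.

Definition preserves (g : {perm 'I_n}) := forall i j, B (g i) (g j) = B i j.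

Lemma preserves_Gamma g : preserves g <-> in_Gamma (fun _ => 1) B g.
Proof. by split=> [|[]]. Qed.

Lemma preserves_twins g i j : preserves g -> twins B (g i) (g j) = twins B i j.
Proof.
move=> g_pres; apply/eqP/eqP => /rowP Erow; apply/rowP => x.
  by have := Erow (g x); rewrite !mxE !g_pres.
by rewrite !mxE -(permKV g x) !g_pres; have := Erow (g^-1%g x); rewrite !mxE.
Qed.

Lemma preservesM g h : preserves g -> preserves h -> preserves (g * h)%g.
Proof. by move=> g_pres h_pres i j; rewrite !permM h_pres g_pres. Qed.

Lemma twins_tperm x y z : twins B x y -> twins B (tperm x y z) z.
Proof. by move=> txy; case: tpermP => [->|->|_ _]; rewrite ?twinsxx // twins_sym. Qed.

Lemma preserves_tperm x y : twins B x y -> preserves (tperm x y).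
Proof. by move=> txy i j; apply: twins_entry; apply: twins_tperm. Qed.

Lemma exists_preserves_map g u v : preserves g -> twins B (g u) v ->
  exists g', preserves g' /\ g' u = v.
Proof.
move=> g_pres tuv; exists (g * tperm (g u) v)%g.
by rewrite permM tpermL; split=> //; apply/preservesM/preserves_tperm.
Qed.

Lemma exists_preserves_swap g u v :
  preserves g -> twins B (g u) v -> twins B (g v) u ->
  exists g', preserves g' /\ g' u = v /\ g' v = u.
Proof.
move=> g_pres tuv tvu.
have [tuv'|ntuv] := boolP (twins B u v).
  by exists (tperm u v); rewrite tpermL tpermR; split=> //; apply: preserves_tperm.
have gv_neq_v : g v != v.
  by apply: contraNneq ntuv => Egv; rewrite twins_sym -Egv.
have gu_neq_gv : g u != g v.
  by rewrite (inj_eq perm_inj); apply: contraNneq ntuv => ->; rewrite twinsxx.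
have u_neq_v : u != v by apply: contraNneq ntuv => ->; rewrite twinsxx.
exists (g * tperm (g u) v * tperm (g v) u)%g.
rewrite !permM tpermL (tpermD gv_neq_v u_neq_v).
rewrite (tpermD gu_neq_gv) ?tpermL; last by rewrite eq_sym.
by split=> //; apply/preservesM/preserves_tperm => //; apply/preservesM/preserves_tperm.
Qed.

End Twins.

Section TwinReduction.

Variables (R : fieldType) (n m : nat) (B : 'M[R]_n) (r : 'I_m -> 'I_n).
Hypotheses (B_sym : B^T = B) (r_red : twin_reduction B r).

Let a' := reduced_weights (fun _ => 1) B r.
Let B' := reduced_matrix B r.

Definition twin_class (x : 'I_n) : 'I_m := xchoose (proj2 r_red x).

Lemma twins_class x : twins B x (r (twin_class x)).
Proof. exact: xchooseP (proj2 r_red x). Qed.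

Lemma twinsE x y : twins B x y = (twin_class x == twin_class y).
Proof.
apply/idP/eqP => [txy|Exy]; last first.
  by apply: twins_trans (twins_class x) _; rewrite Exy twins_sym twins_class.
apply: (proj1 r_red); apply: twins_trans (twins_class y).
by apply: twins_trans txy; rewrite twins_sym twins_class.
Qed.

Lemma twin_class_rep k : twin_class (r k) = k.
Proof. by apply: (proj1 r_red); rewrite twins_sym twins_class. Qed.

Lemma reduced_entry x y : B x y = B' (twin_class x) (twin_class y).
Proof. by rewrite mxE; apply: twins_entry => //; apply: twins_class. Qed.

Lemma reduced_weights_card k : a' k = #|[set x | twin_class x == k]|%:R.
Proof.
rewrite /a' /reduced_weights -sum1_card natr_sum.
by apply: eq_big => [x|//]; rewrite inE twinsE twin_class_rep.
Qed.

Lemma descend_preserves g : preserves B g ->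
  exists s : {perm 'I_m}, in_Gamma a' B' s /\
    forall x, twin_class (g x) = s (twin_class x).
Proof.
move=> g_pres.
pose t k := twin_class (g (r k)).
have t_inj : injective t.
  move=> k l /eqP; rewrite -twinsE preserves_twins //.
  by rewrite twinsE !twin_class_rep => /eqP.
have t_class x : twin_class (g x) = t (twin_class x).
  by apply/eqP; rewrite -twinsE preserves_twins // twins_class.
exists (perm t_inj); split=> [|x]; last by rewrite permE.
split=> [k|k l]; rewrite !permE; last first.
  by rewrite /t -reduced_entry g_pres reduced_entry !twin_class_rep.
rewrite !reduced_weights_card.
suff -> : [set x | twin_class x == t k] = g @: [set x | twin_class x == k].
  by rewrite card_imset //; apply: perm_inj.
apply/setP => x; rewrite -(permKV g x) mem_imset ?inE; last exact: perm_inj.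
by rewrite t_class (inj_eq t_inj).
Qed.

Hypothesis R_pchar0 : [pchar R] =i pred0.

Lemma lift_reduced_aut s : in_Gamma a' B' s ->
  exists h, preserves B h /\ forall x, twin_class (h x) = s (twin_class x).
Proof.
move=> [s_a' s_B'].
have [h h_class] : exists h : {perm 'I_n},
    forall x, twin_class (h x) = s (twin_class x).
  apply: perm_lift_fibers => k; apply: pchar0_natr_inj R_pchar0 _ _ _ => /=.
  by rewrite -!reduced_weights_card s_a'.
by exists h; split=> // i j; rewrite !reduced_entry !h_class s_B'.
Qed.

End TwinReduction.

Theorem lemma3p1 (R : fieldType) (n : nat) (B : 'M[R]_n)
  (hchar : [pchar R] =i pred0) (hn : (0 < n)%N) (hsym : B^T = B)
  (m : nat) (r : 'I_m -> 'I_n) (hr : twin_reduction B r) :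
  let one := fun _ : 'I_n => (1 : R) in
  let a' := reduced_weights one B r in
  let B' := reduced_matrix B r in
  (Gamma_transitive one B <-> Gamma_transitive a' B') /\
  (Gamma_gen_transitive one B <-> Gamma_gen_transitive a' B').
Proof.
move=> one a' B'.
have class_rep := twin_class_rep hr; have class_twinsE := twinsE hr.
split; split=> trans u v.
- have [g [/preserves_Gamma g_pres guv]] := trans (r u) (r v).
  have [s [s_aut s_class]] := descend_preserves hsym hr g_pres.
  by exists s; rewrite -(class_rep u) -s_class guv class_rep.
- have [s [s_aut suv]] := trans (twin_class hr u) (twin_class hr v).
  have [h [h_pres h_class]] := lift_reduced_aut hsym hr hchar s_aut.
  have [g' [g'_pres g'uv]] : exists g', preserves B g' /\ g' u = v.
    by apply: (exists_preserves_map hsym h_pres); rewrite class_twinsE h_class suv.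
  by exists g'; split=> //; apply/preserves_Gamma.
- have [g [/preserves_Gamma g_pres [guv gvu]]] := trans (r u) (r v).
  have [s [s_aut s_class]] := descend_preserves hsym hr g_pres.
  by exists s; rewrite -(class_rep u) -(class_rep v) -!s_class guv gvu !class_rep.
- have [s [s_aut [suv svu]]] := trans (twin_class hr u) (twin_class hr v).
  have [h [h_pres h_class]] := lift_reduced_aut hsym hr hchar s_aut.
  have [g' [g'_pres g'_swap]] : exists g', preserves B g' /\ g' u = v /\ g' v = u.
    by apply: (exists_preserves_swap hsym h_pres); rewrite class_twinsE h_class ?suv ?svu.
  by exists g'; split=> //; apply/preserves_Gamma.
Qed.
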